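(* Let $\mathcal{C}$ be an $(n,k,3)$ binary linear code. Then the extended code $\mathcal{C}'$ is an $(n+1,k,4)$ code with $$\rho(\mathcal{C}') \le 2\rho(\mathcal{C}) = 2r(\mathcal{C}') - 2.$$
   Context: An $(n,k,d)$ code is a linear code of length $n$, dimension $k$ and minimum Hamming distance $d$. The extended code $\mathcal{C}'$ of a binary code $\mathcal{C}$ of length $n$ is obtained by appending to each codeword an overall parity-check bit (the sum mod 2 of its coordinates). A parity-check matrix for a linear code $\mathcal{C}$ is any matrix (possibly with linearly dependent rows) whose rows span $\mathcal{C}^\perp$. The redundancy $r(\mathcal{C})$ is the minimum number of rows of a parity-check matrix for $\mathcal{C}$. For a parity-check matrix $H$, the stopping distance $s(H)$ is the largest integer such that for every set of $s(H)-1$ or fewer columns of $H$, the projection of $H$ onto those columns contains at least one row of Hamming weight exactly one. The stopping redundancy $\rho(\mathcal{C})$ is the smallest number of rows of a parity-check matrix $H$ for $\mathcal{C}$ with $s(H) = d(\mathcal{C})$, the minimum distance of $\mathcal{C}$. *)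

From HB Require Import structures.
From mathcomp Require Import all_boot all_order all_algebra.
Set Implicit Arguments. Unset Strict Implicit. Unset Printing Implicit Defensive.
Import GRing.Theory.
Local Open Scope ring_scope.

(* A binary linear code of length n is the row space of a matrix
   C : 'M['F_2]_(m, n); its dimension is \rank C. *)

Definition wt (n : nat) (v : 'rV['F_2]_n) : nat := #|[set j : 'I_n | v 0 j != 0]|.

(* d is the minimum distance of the (linear) code: the minimum weight of a
   nonzero codeword. *)
Definition is_min_dist (m n : nat) (C : 'M['F_2]_(m, n)) (d : nat) : Prop :=
  (exists v : 'rV['F_2]_n, (v <= C)%MS /\ v != 0 /\ wt v = d) /\
  (forall v : 'rV['F_2]_n, (v <= C)%MS -> v != 0 -> (d <= wt v)%N).

Definition dual_code (m n : nat) (C : 'M['F_2]_(m, n)) : 'M['F_2]_n := kermx C^T.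

(* H is a parity-check matrix of C: its rows span the dual code
   (rows may be linearly dependent). *)
Definition is_pcm (m n r : nat) (C : 'M['F_2]_(m, n)) (H : 'M['F_2]_(r, n)) : Prop :=
  (H == dual_code C)%MS.

(* Extended code: append the overall parity bit to every codeword.
   The map v |-> (v, sum v) is linear, so this is the row space of the
   generator matrix with the parity column appended. *)
Definition ext_code (m n : nat) (C : 'M['F_2]_(m, n)) : 'M['F_2]_(m, n + 1) :=
  row_mx C (\col_i (\sum_j C i j)).

Definition redundancy_is (m n : nat) (C : 'M['F_2]_(m, n)) (r : nat) : Prop :=
  (exists H : 'M['F_2]_(r, n), is_pcm C H) /\
  (forall (r' : nat) (H : 'M['F_2]_(r', n)), is_pcm C H -> (r <= r')%N).

Definition stop_ok (r n : nat) (H : 'M['F_2]_(r, n)) (s : nat) : Prop :=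
  forall S : {set 'I_n}, S != set0 -> (#|S| < s)%N ->
    exists i : 'I_r, #|[set j in S | H i j != 0]| = 1%N.

(* s(H) = s: s is the largest integer with the property stop_ok
   (stop_ok is downward closed in s). *)
Definition stopping_distance_is (r n : nat) (H : 'M['F_2]_(r, n)) (s : nat) : Prop :=
  stop_ok H s /\ ~ stop_ok H s.+1.

Definition good_pcm (m n r : nat) (C : 'M['F_2]_(m, n)) (H : 'M['F_2]_(r, n)) : Prop :=
  is_pcm C H /\ (forall d, is_min_dist C d -> stopping_distance_is H d).

Definition stopping_redundancy_is (m n : nat) (C : 'M['F_2]_(m, n)) (rho : nat) : Prop :=
  (exists H : 'M['F_2]_(rho, n), good_pcm C H) /\
  (forall (r' : nat) (H : 'M['F_2]_(r', n)), good_pcm C H -> (rho <= r')%N).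

(* Over F_2, the indicator of a set S of columns is a codeword iff every row of a
   parity-check matrix H meets S in an even number of positions.  So if d(C) = 3,
   every H has stopping distance 3: a set of one or two columns met by no row
   exactly once would be met evenly by all rows, giving a codeword of weight at
   most 2, while the support of a weight-3 codeword is a stopping set.  Hence
   rho(C) = r(C).  For C', replace each row h of a minimal H by the two rows
   (h, 0) and (h + 1, 1), where h + 1 is the complement of h.  These 2 r(C) rows
   span the dual of C', and every set of 3 columns is met exactly once by one of
   them: if it contains the parity column, a row h meets the other two columns
   once; otherwise a row h meets the three columns once or twice, and then
   (h, 0) or (h + 1, 1) meets them exactly once. *)

From mathcomp Require Import all_boot all_order all_algebra.
From mathcomp Require Import zify.
From Stdlib Require Import Classical Wf_nat.
Set Implicit Arguments. Unset Strict Implicit. Unset Printing Implicit Defensive.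
Import GRing.Theory.
Local Open Scope ring_scope.

Lemma F2_nat_odd (c : nat) : (c%:R : 'F_2) = (odd c)%:R.
Proof.
by rewrite -{1}(odd_double_half c) -mul2n natrD natrM (pchar_Fp_0 (isT : prime 2)) mul0r addr0.
Qed.

Lemma F2_neq0E (x : 'F_2) : x = (x != 0)%:R.
Proof. by case: x => [[|[|//]]] Hx //=; apply/val_inj. Qed.

Lemma addrr_F2 (V : lmodType 'F_2) (v : V) : v + v = 0.
Proof. by rewrite -mulr2n -scaler_nat (pchar_Fp_0 (isT : prime 2)) scale0r. Qed.

Lemma F2_addr1_neq0 (x : 'F_2) : (x + 1 != 0) = (x == 0).
Proof.
by rewrite [x in LHS]F2_neq0E; case: (x =P 0) => /=; rewrite ?addrr_F2 ?add0r ?oner_eq0.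
Qed.

Definition supp n (v : 'rV['F_2]_n) : {set 'I_n} := [set j | v 0 j != 0].

Definition indicator n (S : {set 'I_n}) : 'rV['F_2]_n := \row_j (j \in S)%:R.

Lemma indicatorE n (S : {set 'I_n}) j : indicator S 0 j = (j \in S)%:R.
Proof. by rewrite mxE. Qed.

Lemma supp_indicator n (S : {set 'I_n}) : supp (indicator S) = S.
Proof. by apply/setP => j; rewrite inE indicatorE; case: (j \in S); rewrite ?oner_eq0. Qed.

Lemma indicator_supp n (v : 'rV['F_2]_n) : indicator (supp v) = v.
Proof. by apply/rowP => j; rewrite indicatorE inE [RHS]F2_neq0E. Qed.

Lemma wt_indicator n (S : {set 'I_n}) : wt (indicator S) = #|S|.
Proof. by rewrite /wt -/(supp _) supp_indicator. Qed.

Lemma indicator_eq0 n (S : {set 'I_n}) : (indicator S == 0) = (S == set0).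
Proof.
apply/eqP/eqP => [S0 | ->]; last by apply/rowP => j; rewrite indicatorE inE mxE.
by rewrite -(supp_indicator S) S0; apply/setP => j; rewrite !inE mxE eqxx.
Qed.

Lemma mul_indicator_tr r n (S : {set 'I_n}) (A : 'M['F_2]_(r, n)) i :
  (indicator S *m A^T) 0 i = (odd #|[set j in S | A i j != 0]|)%:R.
Proof.
rewrite -F2_nat_odd -sum1_card natr_sum big_mkcond mxE; apply: eq_bigr => j _.
rewrite indicatorE mxE inE [A i j in LHS]F2_neq0E -natrM mulnb.
by case: (_ && _).
Qed.

Lemma rank_dual_code m n (C : 'M['F_2]_(m, n)) : \rank (dual_code C) = (n - \rank C)%N.
Proof. by rewrite mxrank_ker mxrank_tr. Qed.

Lemma dual_codeK m n (C : 'M['F_2]_(m, n)) : (dual_code (dual_code C) == C)%MS.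
Proof.
have sub_dd : (C <= dual_code (dual_code C))%MS.
  by apply/sub_kermxP; rewrite -[C in C *m _]trmxK -trmx_mul mulmx_ker trmx0.
rewrite sub_dd andbT; have [_ <-] := mxrank_leqif_sup sub_dd.
rewrite !rank_dual_code; have := rank_leq_col C; lia.
Qed.

Section ParityCheck.

Variables (m n r : nat) (C : 'M['F_2]_(m, n)) (H : 'M['F_2]_(r, n)).
Hypothesis pcmH : is_pcm C H.

Lemma pcm_mulmx_tr : H *m C^T = 0.
Proof. by apply/sub_kermxP; case/andP: pcmH. Qed.

Lemma pcmP (v : 'rV['F_2]_n) : reflect (v *m H^T = 0) (v <= C)%MS.
Proof.
apply: (iffP idP) => [/submxP[w ->] | vH].
  by rewrite -mulmxA -(trmxK (C *m H^T)) trmx_mul trmxK pcm_mulmx_tr trmx0 mulmx0.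
case/andP: (dual_codeK C) => ddC _; apply: submx_trans ddC; apply/sub_kermxP.
by case/andP: pcmH => _ /submxP[X ->]; rewrite trmx_mul mulmxA vH mul0mx.
Qed.

Lemma codeword_not_stop_ok (v : 'rV['F_2]_n) :
  (v <= C)%MS -> v != 0 -> ~ stop_ok H (wt v).+1.
Proof.
move=> /pcmP vH v0 stopH.
have supp0 : supp v != set0 by rewrite -indicator_eq0 indicator_supp.
have [i meet1] := stopH _ supp0 (ltnSn _).
have /rowP/(_ i) := vH; rewrite -{1}(indicator_supp v) mul_indicator_tr meet1 !mxE.
by move/eqP; rewrite oner_eq0.
Qed.

Lemma stop_ok3 d : is_min_dist C d -> (2 < d)%N -> stop_ok H 3.
Proof.
move=> [_ minC] d_gt2 S S0 S_lt3.
have [/existsP[i /eqP meet1] | /existsPn meet_ne1] :=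
  boolP [exists i, #|[set j in S | H i j != 0]| == 1%N]; first by exists i.
have even_meet i : ~~ odd #|[set j in S | H i j != 0]|.
  have : (#|[set j in S | H i j != 0%R]| <= #|S|)%N.
    by apply/subset_leq_card/subsetP => j; rewrite inE => /andP[].
  by move: (meet_ne1 i) S_lt3; case: #|_| => [|[|[|c]]] //= _; lia.
have : (indicator S <= C)%MS.
  by apply/pcmP/rowP => i; rewrite mul_indicator_tr (negbTE (even_meet i)) mxE.
move/minC; rewrite indicator_eq0 wt_indicator S0 => /(_ isT).
by rewrite leqNgt (leq_trans S_lt3 d_gt2).
Qed.

Lemma min_dist_uniq d1 d2 : is_min_dist C d1 -> is_min_dist C d2 -> d1 = d2.
Proof.
move=> [[v1 [v1C [v1_0 <-]]] min1] [[v2 [v2C [v2_0 <-]]] min2].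
by apply/eqP; rewrite eqn_leq min1 ?min2.
Qed.

(* The support of a minimum-weight codeword is a stopping set, so s(H) <= d(C) always. *)
Lemma good_pcmP d : is_min_dist C d -> stop_ok H d -> good_pcm C H.
Proof.
move=> minC stopH; split=> // d' /(min_dist_uniq minC) <-; split=> //.
by have [[v [vC [v0 <-]]] _] := minC; apply: codeword_not_stop_ok.
Qed.

Lemma min_dist3_good_pcm : is_min_dist C 3 -> good_pcm C H.
Proof. by move=> minC; apply: (good_pcmP minC); apply: stop_ok3 minC isT. Qed.

End ParityCheck.

Lemma redundancy_rank m n (C : 'M['F_2]_(m, n)) : redundancy_is C (\rank (dual_code C)).
Proof.
split; first by exists (row_base (dual_code C)); apply/eqmxP/eq_row_base.
by move=> r H /eqmx_rank <-; apply: rank_leq_row.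
Qed.

Lemma stopping_redundancy_min_dist3 m n (C : 'M['F_2]_(m, n)) :
  is_min_dist C 3 -> stopping_redundancy_is C (\rank (dual_code C)).
Proof.
move=> minC; have [[H pcmH] min_r] := redundancy_rank C.
split; first by exists H; apply: min_dist3_good_pcm.
by move=> r H' [pcmH' _]; apply: min_r pcmH'.
Qed.

Lemma card_split_last n (S : {set 'I_(n + 1)}) :
  #|S| = (#|lshift 1 @^-1: S| + (rshift n ord0 \in S))%N.
Proof.
rewrite -!sum1_card big_split_ord big_ord1_cond.
by congr (_ + _)%N; apply: eq_bigl => j; rewrite inE.
Qed.

Definition ext_mx n : 'M['F_2]_(n, n + 1) := row_mx 1%:M (const_mx 1).

Section ExtendedCode.

Variables (m n : nat) (C : 'M['F_2]_(m, n)).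

Lemma ext_codeE : ext_code C = C *m ext_mx n.
Proof.
rewrite mul_mx_row mulmx1; congr row_mx; apply/matrixP => i j.
by rewrite !mxE; apply: eq_bigr => k _; rewrite mxE mulr1.
Qed.

Lemma mxrank_ext_code : \rank (ext_code C) = \rank C.
Proof.
have extK : ext_mx n *m col_mx 1%:M 0 = 1%:M by rewrite mul_row_col mulmx1 mulmx0 addr0.
apply/eqP; rewrite eqn_leq ext_codeE mxrankM_maxl /=.
by rewrite -{1}[C]mulmx1 -extK mulmxA mxrankM_maxl.
Qed.

Lemma sub_ext_codeP (w : 'rV['F_2]_(n + 1)) :
  reflect (exists2 v, (v <= C)%MS & w = v *m ext_mx n) (w <= ext_code C)%MS.
Proof.
rewrite ext_codeE; apply: (iffP submxP) => [[x ->] | [v /submxP[x ->] ->]].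
  by exists (x *m C); rewrite ?submxMl ?mulmxA.
by exists x; rewrite mulmxA.
Qed.

Lemma ext_mx_eq0 (v : 'rV['F_2]_n) : (v *m ext_mx n == 0) = (v == 0).
Proof.
apply/eqP/eqP => [| ->]; last by rewrite mul0mx.
by rewrite mul_mx_row mulmx1 => /(congr1 lsubmx); rewrite row_mxKl linear0.
Qed.

Lemma wt_ext (v : 'rV['F_2]_n) : wt (v *m ext_mx n) = (wt v + odd (wt v))%N.
Proof.
rewrite /wt card_split_last mul_mx_row mulmx1; congr (_ + _)%N.
  by apply: eq_card => j; rewrite !inE row_mxEl.
rewrite inE row_mxEr -trmx_const -{1}(indicator_supp v) mul_indicator_tr.
have -> : [set j in supp v | (const_mx 1 : 'rV['F_2]_n) ord0 j != 0] = supp v.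
  by apply/setP => j; rewrite !inE mxE oner_eq0 andbT.
by case: (odd _); rewrite ?oner_eq0 ?eqxx.
Qed.

Lemma ext_min_dist d : is_min_dist C d -> odd d -> is_min_dist (ext_code C) d.+1.
Proof.
move=> [[v [vC [v0 wt_v]]] minC] odd_d; split.
  exists (v *m ext_mx n); split; first by apply/sub_ext_codeP; exists v.
  by rewrite ext_mx_eq0 wt_ext wt_v odd_d addn1.
move=> _ /sub_ext_codeP[u uC ->]; rewrite ext_mx_eq0 wt_ext => u0.
have := minC u uC u0; rewrite leq_eqVlt => /orP[/eqP <- | ]; first by rewrite odd_d addn1.
by move=> lt_d; apply: leq_trans lt_d (leq_addr _ _).
Qed.

End ExtendedCode.

Lemma stop_ok3_triple r n (H : 'M['F_2]_(r, n)) (L : {set 'I_n}) :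
  stop_ok H 3 -> #|L| = 3%N ->
  exists i, #|[set j in L | H i j != 0%R]| = 1%N \/ #|[set j in L | H i j != 0%R]| = 2%N.
Proof.
move=> stopH L3; have [x xL] : exists x, x \in L by apply/set0Pn; rewrite -cards_eq0 L3.
have Lx2 : #|L :\ x| = 2%N by move: (cardsD1 x L); rewrite xL L3; lia.
have [i meet1] : exists i, #|[set j in L :\ x | H i j != 0%R]| = 1%N.
  by apply: stopH; rewrite ?Lx2 // -cards_eq0 Lx2.
exists i; rewrite (cardsD1 x) !inE xL /=.
have -> : [set j in L | H i j != 0%R] :\ x = [set j in L :\ x | H i j != 0%R].
  by apply/setP => j; rewrite !inE andbA.
by rewrite meet1; case: (H i x != 0); [right | left].
Qed.

Definition ext_pcm r n (H : 'M['F_2]_(r, n)) : 'M['F_2]_(r + r, n + 1) :=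
  col_mx (row_mx H 0) (row_mx (H + const_mx 1) (const_mx 1)).

Section ExtendedParityCheck.

Variables (r n : nat) (H : 'M['F_2]_(r, n)).

Lemma ext_pcm_mul_tr : ext_pcm H *m (ext_mx n)^T = col_mx H H.
Proof.
rewrite mul_col_mx tr_row_mx trmx1 trmx_const !mul_row_col !mulmx1 mul0mx addr0.
have -> : (const_mx 1 : 'M_(r, 1)) *m const_mx 1 = const_mx 1 :> 'M['F_2]_(r, n).
  by apply/matrixP => i j; rewrite !mxE big_ord1 !mxE mulr1.
by rewrite -addrA addrr_F2 addr0.
Qed.

Lemma ones_sub_ext_pcm : (0 < r)%N -> ((const_mx 1 : 'rV['F_2]_(n + 1)) <= ext_pcm H)%MS.
Proof.
move=> r_gt0; have := submx_refl (ext_pcm H); rewrite col_mx_sub => /andP[top bot].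
have := addmx_sub top bot; rewrite add_row_mx addrA addrr_F2 !add0r row_mx_const.
apply: submx_trans.
by have := row_sub (Ordinal r_gt0) (const_mx 1 : 'M['F_2]_(r, n + 1)); rewrite row_const.
Qed.

Lemma ext_mx_split (u : 'rV['F_2]_(n + 1)) :
  u = u *m (ext_mx n)^T *m row_mx 1%:M 0 + rsubmx u *m const_mx 1.
Proof.
have -> : u *m (ext_mx n)^T = lsubmx u + rsubmx u *m const_mx 1.
  by rewrite -[u in LHS]hsubmxK tr_row_mx trmx1 trmx_const mul_row_col mulmx1.
rewrite mul_mx_row mulmx1 mulmx0 -row_mx_const mul_mx_row add_row_mx add0r.
rewrite -addrA addrr_F2 addr0 -[LHS]hsubmxK; congr row_mx.
by apply/matrixP => i j; rewrite !ord1 !mxE big_ord1 !mxE mulr1.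
Qed.

Lemma ext_pcm_is_pcm m (C : 'M['F_2]_(m, n)) :
  is_pcm C H -> (0 < r)%N -> is_pcm (ext_code C) (ext_pcm H).
Proof.
move=> pcmH r_gt0; apply/andP; split.
  apply/sub_kermxP; rewrite ext_codeE trmx_mul mulmxA ext_pcm_mul_tr mul_col_mx.
  by rewrite (pcm_mulmx_tr pcmH) col_mx0.
apply/row_subP => i; set u := row i _.
have /sub_kermxP : (u <= dual_code (ext_code C))%MS by apply: row_sub.
rewrite ext_codeE trmx_mul mulmxA => /sub_kermxP/submx_trans/(_ (andP pcmH).2).
move=> /submxP[z uH].
rewrite (ext_mx_split u) uH -mulmxA mul_mx_row mulmx1 mulmx0; apply: addmx_sub.
  have := submx_refl (ext_pcm H); rewrite col_mx_sub => /andP[top _].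
  exact: submx_trans (submxMl _ _) top.
exact: submx_trans (submxMl _ _) (ones_sub_ext_pcm r_gt0).
Qed.

Lemma card_ext_pcm_top (S : {set 'I_(n + 1)}) i :
  #|[set j in S | ext_pcm H (lshift r i) j != 0]| =
  #|[set j in lshift 1 @^-1: S | H i j != 0]|.
Proof.
rewrite /ext_pcm card_split_last inE col_mxEu row_mxEr mxE eqxx andbF addn0.
by apply: eq_card => j; rewrite !inE col_mxEu row_mxEl.
Qed.

Lemma card_ext_pcm_bot (S : {set 'I_(n + 1)}) i :
  #|[set j in S | ext_pcm H (rshift r i) j != 0]| =
  (#|lshift 1 @^-1: S| - #|[set j in lshift 1 @^-1: S | H i j != 0%R]|
   + (rshift n ord0 \in S))%N.
Proof.
rewrite /ext_pcm card_split_last inE col_mxEd row_mxEr mxE oner_eq0 andbT; congr (_ + _)%N.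
rewrite [in RHS]setIdE -(cardsID [set j | H i j != 0] (lshift 1 @^-1: S)) addKn.
by apply: eq_card => j; rewrite !inE col_mxEd row_mxEl !mxE F2_addr1_neq0 negbK andbC.
Qed.

Lemma ext_pcm_stop_ok4 : stop_ok H 3 -> stop_ok (ext_pcm H) 3 -> stop_ok (ext_pcm H) 4.
Proof.
move=> stopH stop3 S S0 S_lt4; have [|S_ge3] := ltnP #|S| 3; first exact: stop3.
rewrite card_split_last in S_lt4 S_ge3; set L := lshift 1 @^-1: S in S_lt4 S_ge3 *.
have [lastS | lastS] := boolP (rshift n ord0 \in S);
  rewrite ?lastS ?(negbTE lastS) /= in S_lt4 S_ge3.
  have L2 : #|L| = 2%N by move: S_lt4 S_ge3; case: #|L| => [|[|[|[]]]].
  have [i meet1] : exists i, #|[set j in L | H i j != 0%R]| = 1%N.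
    by apply: stopH; rewrite -?cards_eq0 L2.
  by exists (lshift r i); rewrite card_ext_pcm_top.
have L3 : #|L| = 3%N by move: S_lt4 S_ge3; case: #|L| => [|[|[|[|[]]]]].
have [i [meet1 | meet2]] := stop_ok3_triple stopH L3.
  by exists (lshift r i); rewrite card_ext_pcm_top.
by exists (rshift r i); rewrite card_ext_pcm_bot (negbTE lastS) L3 meet2.
Qed.

End ExtendedParityCheck.

Lemma rank_dual_code_gt0 m n (C : 'M['F_2]_(m, n)) d :
  is_min_dist C d -> (1 < d)%N -> (0 < \rank (dual_code C))%N.
Proof.
move=> [[v [_ [v0 _]]] minC] d_gt1.
rewrite rank_dual_code subn_gt0 ltn_neqAle rank_leq_col andbT; apply/negP => /eqP fullC.
have [j _] : exists j, j \in supp v by apply/set0Pn; rewrite -indicator_eq0 indicator_supp.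
have : (indicator [set j] <= C)%MS by apply: submx_full; rewrite /row_full fullC.
move/minC; rewrite indicator_eq0 -cards_eq0 wt_indicator cards1 => /(_ isT).
by rewrite leqNgt d_gt1.
Qed.

Lemma stopping_redundancy_exists m n (C : 'M['F_2]_(m, n)) r (H : 'M['F_2]_(r, n)) :
  good_pcm C H -> exists2 rho, stopping_redundancy_is C rho & (rho <= r)%N.
Proof.
move=> goodH; pose has_good_pcm r' := exists H' : 'M['F_2]_(r', n), good_pcm C H'.
have [rho [[[H' goodH'] least] _]] := dec_inh_nat_subset_has_unique_least_element
  has_good_pcm (fun r' => classic _) (ex_intro _ r (ex_intro _ H goodH)).
exists rho; last by apply/leP/least; exists H.
by split=> [|r' H'' goodH'']; [exists H' | apply/leP/least; exists H''].
Qed.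

Theorem theorem9 (n k m : nat) (C : 'M['F_2]_(m, n)) :
  \rank C = k -> is_min_dist C 3 ->
  \rank (ext_code C) = k /\ is_min_dist (ext_code C) 4 /\
  exists rho rho' r' : nat,
    [/\ stopping_redundancy_is C rho,
        stopping_redundancy_is (ext_code C) rho',
        redundancy_is (ext_code C) r',
        (rho' <= 2 * rho)%N &
        2 * rho = 2 * r' - 2]%N.
Proof.
move=> rankC minC; have minC' := ext_min_dist minC isT.
split; first by rewrite mxrank_ext_code.
split=> //; have [[H pcmH] _] := redundancy_rank C.
have pcmH' := ext_pcm_is_pcm pcmH (rank_dual_code_gt0 minC isT).
have goodH' : good_pcm (ext_code C) (ext_pcm H).
  apply: (good_pcmP pcmH' minC').
  exact: ext_pcm_stop_ok4 (stop_ok3 pcmH minC isT) (stop_ok3 pcmH' minC' isT).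
have [rho' stop_rho' rho'_le] := stopping_redundancy_exists goodH'.
exists (\rank (dual_code C)), rho', (\rank (dual_code (ext_code C))); split=> //.
- exact: stopping_redundancy_min_dist3.
- exact: redundancy_rank.
- by rewrite mul2n -addnn.
- by rewrite !rank_dual_code mxrank_ext_code; have := rank_leq_col C; lia.
Qed.
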